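(* Let $\mathcal{T}$ be a single-elimination tournament, $\sigma$ a scoring system, $u\in V(\mathcal{T})$, $\mathcal{B}=\{B_1,\dots,B_r\}$ a set of brackets of $\mathcal{T}$, and $\widetilde{B}_i$ the restriction of $B_i$ to $V(\mathcal{T}_u)$. Suppose that: (a) $\{\widetilde{B}_1,\dots,\widetilde{B}_r\}$ is a $\sigma_u$-resolving set for $\mathcal{T}_u$; (b) $B_i(x)\notin P(u)$ for all $i$ and all $x\in M(\mathcal{T})\setminus V(\mathcal{T}_u)$; and (c) for every pair of brackets $B,B'$ of $\mathcal{T}$ with $\mathrm{score}_\sigma(B_i,B)=\mathrm{score}_\sigma(B_i,B')$ for all $i$, we have for all $a\in P(\mathcal{T})\setminus P(u)$ and all $x\in M(\mathcal{T})$ that $B(x)=a$ if and only if $B'(x)=a$. Then $\mathcal{B}$ is a $\sigma$-resolving set for $\mathcal{T}$.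
   Context: A single-elimination tournament is a finite directed graph $\mathcal{T}$ such that: (a) $\mathcal{T}$ has exactly one sink (vertex with no out-neighbours); (b) every non-sink vertex has exactly one out-neighbour; (c) $\mathcal{T}$ has no directed cycles; (d) $|N^-(v)|\ne 1$ for every vertex $v$, where $N^-(v)$ denotes the set of in-neighbours of $v$. The players $P(\mathcal{T})$ are the sources and the matches are $M(\mathcal{T})=V(\mathcal{T})\setminus P(\mathcal{T})$. For a vertex $u$, $P(u)$ is the set of players $a$ for which there is a directed walk from $a$ to $u$ (length $0$ allowed). For $u\in V(\mathcal{T})$, $\mathcal{T}_u$ is the digraph obtained from $\mathcal{T}$ by deleting every vertex $v$ with $P(v)\not\subseteq P(u)$ (it is a single-elimination tournament), and $\sigma_u$ is the restriction of $\sigma$ to $M(\mathcal{T})\cap V(\mathcal{T}_u)=M(\mathcal{T}_u)$. A bracket is a function $B:V(\mathcal{T})\to P(\mathcal{T})$ with $B(a)=a$ for every player $a$ and $B(x)\in\{B(u):u\in N^-(x)\}$ for every match $x$. A scoring system is any function $\sigma:M(\mathcal{T})\to\mathbb{R}_{>0}$. For brackets $B,B'$ let $\mathrm{score}_\sigma(B,B')=\sum_{x\in M(\mathcal{T}):\,B(x)=B'(x)}\sigma(x)$. A set of brackets $\mathcal{B}$ is $\sigma$-resolving if for every pair of distinct brackets $B\ne B'$ there is $B_i\in\mathcal{B}$ with $\mathrm{score}_\sigma(B_i,B)\ne\mathrm{score}_\sigma(B_i,B')$ (and analogously for $\mathcal{T}_u,\sigma_u$). *)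

From HB Require Import structures.
From mathcomp Require Import all_boot all_order all_algebra.
Set Implicit Arguments. Unset Strict Implicit. Unset Printing Implicit Defensive.
Import Order.TTheory GRing.Theory Num.Theory.
Local Open Scope ring_scope.

(* Sub-tournaments T_u are represented as the induced subgraph on a vertex
   set S : {set V}; all notions below are relative to such an S
   (S = [set: V] gives the whole digraph). *)

Section Tournaments.
Variable V : finType.
Variable e : rel V.

Definition out_nb (v : V) : {set V} := [set w | e v w].
Definition in_nb_all (v : V) : {set V} := [set w | e w v].

Definition is_SET : Prop :=
  [/\ #|[set v | #|out_nb v| == 0%N]| = 1%N,
      (forall v, #|out_nb v| != 0%N -> #|out_nb v| = 1%N),
      (forall v w, e v w -> ~~ connect e w v) &
      (forall v, #|in_nb_all v| != 1%N)].

Definition in_nb (S : {set V}) (v : V) : {set V} := [set w in S | e w v].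
Definition players (S : {set V}) : {set V} := [set v in S | in_nb S v == set0].
Definition matches (S : {set V}) : {set V} := S :\: players S.

Definition Pof (u : V) : {set V} := [set a in players [set: V] | connect e a u].

Definition Tsub (u : V) : {set V} := [set v | Pof v \subset Pof u].

(* a bracket of the digraph induced on S (only its values on S matter) *)
Definition is_bracket (S : {set V}) (B : V -> V) : Prop :=
  [/\ (forall v, v \in S -> B v \in players S),
      (forall a, a \in players S -> B a = a) &
      (forall x, x \in matches S -> exists2 w, w \in in_nb S x & B x = B w)].

Variable R : realFieldType.

Definition score (S : {set V}) (sigma : V -> R) (B B' : V -> V) : R :=
  \sum_(x in matches S | B x == B' x) sigma x.

Definition resolving (S : {set V}) (sigma : V -> R) (r : nat) (Bs : 'I_r -> V -> V) : Prop :=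
  forall B B', is_bracket S B -> is_bracket S B' ->
    ~ {in S, B =1 B'} ->
    exists i : 'I_r, score S sigma (Bs i) B != score S sigma (Bs i) B'.

End Tournaments.

From HB Require Import structures.
From mathcomp Require Import all_boot all_order all_algebra.
Import Order.TTheory GRing.Theory Num.Theory.

(* Since every vertex has at most one out-neighbour, the vertices reachable from
   a given one form a chain, and a bracket B picks on the path from B v to v the
   winner B v at every vertex. Splitting every score into the part inside T_u and
   the part outside, (b) and (c) make the outside parts of B and B' agree, so
   their T_u-scores agree and (a) gives B = B' on T_u. Outside T_u, a vertex won
   by a player outside P(u) is won by the same player in both brackets by (c);
   a vertex v won by a player of P(u) lies above u, so its winner is B u. *)

Set Implicit Arguments.
Unset Strict Implicit.
Unset Printing Implicit Defensive.
Local Open Scope ring_scope.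

Lemma resolving_eq_scores (V : finType) (e : rel V) (R : realFieldType)
    (S : {set V}) (sigma : V -> R) r (Bs : 'I_r -> V -> V) :
  resolving e S sigma Bs <->
  (forall B B', is_bracket e S B -> is_bracket e S B' ->
     (forall i, score e S sigma (Bs i) B = score e S sigma (Bs i) B') ->
     {in S, B =1 B'}).
Proof.
split=> [res B B' B_bracket B'_bracket eq_scores | eq_res B B' B_bracket B'_bracket neq].
  case: (pickP [pred v in S | B v != B' v]) => [v /andP[vS /eqP neq] | agree].
    have [i] := res B B' B_bracket B'_bracket (fun eqB => neq (eqB v vS)).
    by rewrite eq_scores eqxx.
  by move=> v vS; move: (agree v) => /=; rewrite vS => /negbFE/eqP.
pose separated i := score e S sigma (Bs i) B != score e S sigma (Bs i) B'.
have [/existsP //|/existsPn same] := boolP [exists i, separated i].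
by case: neq; apply: eq_res => // i; apply/eqP; move: (same i); rewrite negbK.
Qed.

Section Forest.
Variable V : finType.
Variable e : rel V.
Hypothesis e_functional : forall v w w', e v w -> e v w' -> w = w'.
Hypothesis e_acyclic : forall v w, e v w -> ~~ connect e w v.

Lemma connect_first_edge y z : connect e y z -> y != z ->
  exists2 y', e y y' & connect e y' z.
Proof.
move=> /connectP[[|y' p] /=]; first by move=> _ ->; rewrite eqxx.
by move=> /andP[ey p_path] -> _; exists y' => //; apply/connectP; exists p.
Qed.

Lemma connect_last_edge w a : connect e w a -> w != a ->
  exists2 z, connect e w z & e z a.
Proof.
move=> /connectP[p]; case/lastP: p => [|p z] /=; first by move=> _ ->; rewrite eqxx.
rewrite rcons_path last_rcons => /andP[p_path ez] -> _.
by exists (last w p) => //; apply/connectP; exists p.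
Qed.

Lemma connect_total a y z : connect e a y -> connect e a z ->
  connect e y z || connect e z y.
Proof.
move=> /connectP[p]; elim: p a => [|y' p IHp] a /=; first by move=> _ -> ->.
move=> /andP[ay' p_path] y_last az.
have [<-|a_neq_z] := eqVneq a z.
  by apply/orP; right; apply/connectP; exists (y' :: p) => //=; rewrite ay'.
have [y'' ay'' y''z] := connect_first_edge az a_neq_z.
by apply: IHp p_path y_last _; rewrite (e_functional ay' ay'').
Qed.

Lemma connect_edge_eq y z v : connect e y z -> e y v -> e z v -> y = z.
Proof.
move=> yz ey ez; have [//|y_neq_z] := eqVneq y z.
have [y' ey' y'z] := connect_first_edge yz y_neq_z.
by move: (e_acyclic ez); rewrite (e_functional ey ey') y'z.
Qed.

Lemma common_ancestor_edge_eq a y z v :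
  connect e a y -> connect e a z -> e y v -> e z v -> y = z.
Proof.
move=> ay az ey ez; case/orP: (connect_total ay az) => [yz|zy].
  exact: connect_edge_eq yz ey ez.
by apply/esym; apply: connect_edge_eq zy ez ey.
Qed.

Lemma card_ancestors_lt y v : e y v ->
  (#|[set w | connect e w y]| < #|[set w | connect e w v]|)%N.
Proof.
move=> ey; apply: proper_card; apply/properP; split.
  by apply/subsetP=> w; rewrite !inE => wy; apply: connect_trans wy (connect1 ey).
by exists v; rewrite !inE ?connect0 // (negbTE (e_acyclic ey)).
Qed.

Lemma edge_ind (P : V -> Prop) :
  (forall v, (forall y, e y v -> P y) -> P v) -> forall v, P v.
Proof.
move=> IH v; have := ltnSn #|[set w | connect e w v]|.
elim: _.+1 {-2}v => // n IHn {}v lt_v; apply: IH => y ey.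
by apply: IHn; apply: leq_trans (card_ancestors_lt ey) _.
Qed.

Lemma player_edgeF v w : v \in players e [set: V] -> e w v = false.
Proof.
rewrite inE => /andP[_ /eqP no_in]; apply/negbTE/negP => ew.
by have := in_set0 w; rewrite -no_in !inE ew.
Qed.

Lemma notin_players_matches v : v \notin players e [set: V] -> v \in matches e [set: V].
Proof. by move=> v_nonplayer; rewrite in_setD v_nonplayer in_setT. Qed.

Section Bracket.
Variable B : V -> V.
Hypothesis B_bracket : is_bracket e [set: V] B.

Lemma bracket_connect v : connect e (B v) v.
Proof.
case: B_bracket => _ B_player B_match; elim/edge_ind: v => v IH.
have [/B_player ->|/notin_players_matches/B_match[y]] := boolP (v \in players e [set: V]).
  exact: connect0.
by rewrite inE => /andP[_ ey] ->; apply: connect_trans (IH y ey) (connect1 ey).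
Qed.

Lemma bracket_path_winner v w : connect e (B v) w -> connect e w v -> B w = B v.
Proof.
case: B_bracket => _ _ B_match; elim/edge_ind: v w => v IH w Bv_w wv.
have [-> //|w_neq_v] := eqVneq w v.
have [z wz ez] := connect_last_edge wv w_neq_v.
have [v_player|/notin_players_matches/B_match[y]] := boolP (v \in players e [set: V]).
  by rewrite player_edgeF in ez.
rewrite inE => /andP[_ ey] Bv_eq; rewrite Bv_eq in Bv_w *.
have y_eq_z : y = z :=
  common_ancestor_edge_eq (bracket_connect y) (connect_trans Bv_w wz) ey ez.
by apply: IH ey _ Bv_w _; rewrite y_eq_z.
Qed.

End Bracket.

Section DownClosed.
Variable S : {set V}.
Hypothesis S_closed : forall w v, e w v -> v \in S -> w \in S.

Lemma connect_closed w v : connect e w v -> v \in S -> w \in S.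
Proof.
move=> /connectP[p]; elim: p w => [|y p IHp] w /=; first by move=> _ ->.
by move=> /andP[wy p_path] v_last vS; apply: S_closed wy (IHp y p_path v_last vS).
Qed.

Lemma in_nb_closed v : v \in S -> in_nb e S v = in_nb e [set: V] v.
Proof.
move=> vS; apply/setP=> w; rewrite !inE andTb.
by apply/andb_idl => /S_closed; apply.
Qed.

Lemma players_closed v : v \in S -> (v \in players e S) = (v \in players e [set: V]).
Proof. by move=> vS; rewrite !inE in_nb_closed // vS. Qed.

Lemma matches_closed x : (x \in matches e S) = (x \in matches e [set: V]) && (x \in S).
Proof.
rewrite !in_setD in_setT andbT.
by have [xS|] := boolP (x \in S); rewrite ?andbF // players_closed.
Qed.

Lemma bracket_closed B : is_bracket e [set: V] B -> is_bracket e S B.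
Proof.
move=> B_bracket; have [B_player B_fix B_match] := B_bracket; split.
- move=> v vS; rewrite players_closed ?B_player //.
  exact: connect_closed (bracket_connect B_bracket v) vS.
- move=> a aP; have aS : a \in S by move: aP; rewrite inE => /andP[].
  by apply: B_fix; rewrite -players_closed.
- move=> x; rewrite matches_closed => /andP[/B_match[w wx Bx] xS].
  by exists w; rewrite ?in_nb_closed.
Qed.

Lemma score_split (R : realFieldType) (sigma : V -> R) B C :
  score e [set: V] sigma B C = score e S sigma B C +
    \sum_(x in matches e [set: V] | (B x == C x) && (x \notin S)) sigma x.
Proof.
rewrite /score (bigID (mem S)) /=; congr (_ + _); apply: eq_bigl => x.
  by rewrite matches_closed; case: (x \in S); rewrite ?andbF ?andbT.
by rewrite andbA.
Qed.

End DownClosed.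

Lemma Pof_connect w v : connect e w v -> Pof e w \subset Pof e v.
Proof.
move=> wv; apply/subsetP=> a; rewrite !inE => /andP[-> aw] /=.
exact: connect_trans aw wv.
Qed.

Lemma Tsub_closed u w v : e w v -> v \in Tsub e u -> w \in Tsub e u.
Proof.
rewrite !inE => ew; apply: subset_trans.
exact: Pof_connect (connect1 ew).
Qed.

Lemma connect_Tsub u w : connect e w u -> w \in Tsub e u.
Proof. by rewrite inE; apply: Pof_connect. Qed.

Lemma bracket_Pof_winner u B v : is_bracket e [set: V] B ->
  v \notin Tsub e u -> B v \in Pof e u -> B v = B u.
Proof.
move=> B_bracket v_out; rewrite inE => /andP[_ Bv_u].
case/orP: (connect_total Bv_u (bracket_connect B_bracket v)) => [uv|vu].
  exact/esym/(bracket_path_winner B_bracket).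
by rewrite connect_Tsub in v_out.
Qed.

Section OutsidePlayers.
Variable u : V.
Variables B B' : V -> V.
Hypothesis B_bracket : is_bracket e [set: V] B.
Hypothesis B'_bracket : is_bracket e [set: V] B'.
Hypothesis same_outside_players : forall a, a \in players e [set: V] :\: Pof e u ->
  forall x, x \in matches e [set: V] -> (B x == a) = (B' x == a).

Lemma score_Tsub_eq (R : realFieldType) (sigma : V -> R) Bi :
  is_bracket e [set: V] Bi ->
  (forall x, x \in matches e [set: V] -> x \notin Tsub e u -> Bi x \notin Pof e u) ->
  score e [set: V] sigma Bi B = score e [set: V] sigma Bi B' ->
  score e (Tsub e u) sigma Bi B = score e (Tsub e u) sigma Bi B'.
Proof.
move=> [Bi_player _ _] Bi_out eq_score.
move: eq_score; rewrite !(score_split (@Tsub_closed u)).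
set out := (X in _ + X = _); set out' := (X in _ = _ + X).
suff -> : out = out' by move/addIr.
apply: eq_bigl => x; have [x_match|] //= := boolP (x \in matches e [set: V]).
have [xT|x_out] := boolP (x \in Tsub e u); rewrite ?andbF ?andbT //.
have Bix_out : Bi x \in players e [set: V] :\: Pof e u.
  by rewrite in_setD Bi_out // Bi_player ?in_setT.
by rewrite ![Bi x == _]eq_sym same_outside_players.
Qed.

Lemma agree_from_Tsub : {in Tsub e u, B =1 B'} -> B =1 B'.
Proof.
move=> eqT v; have [vT|v_out] := boolP (v \in Tsub e u); first exact: eqT.
have [v_player|/notin_players_matches v_match] := boolP (v \in players e [set: V]).
  by case: B_bracket => _ -> //; case: B'_bracket => _ -> //.
have outside C : is_bracket e [set: V] C -> C v \notin Pof e u ->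
    C v \in players e [set: V] :\: Pof e u.
  by move=> [C_player _ _] Cv_out; rewrite in_setD Cv_out C_player ?in_setT.
have [Bv_in|/(outside B B_bracket) Bv_out] := boolP (B v \in Pof e u); last first.
  by apply/eqP; rewrite eq_sym -same_outside_players ?eqxx.
have [B'v_in|/(outside B' B'_bracket) B'v_out] := boolP (B' v \in Pof e u); last first.
  by apply/eqP; rewrite same_outside_players ?eqxx.
rewrite (bracket_Pof_winner B_bracket v_out Bv_in).
rewrite (bracket_Pof_winner B'_bracket v_out B'v_in).
by apply: eqT; rewrite inE.
Qed.

End OutsidePlayers.

End Forest.

Lemma SET_functional (V : finType) (e : rel V) :
  is_SET e -> forall v w w', e v w -> e v w' -> w = w'.
Proof.
move=> [_ out_le1 _ _] v w w' ew ew'.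
have /out_le1/eqP/cards1P[x out_v] : #|out_nb e v| != 0%N.
  by rewrite cards_eq0; apply/set0Pn; exists w; rewrite inE.
have : w \in out_nb e v by rewrite inE.
have : w' \in out_nb e v by rewrite inE.
by rewrite out_v !inE => /eqP -> /eqP ->.
Qed.

Lemma SET_acyclic (V : finType) (e : rel V) :
  is_SET e -> forall v w, e v w -> ~~ connect e w v.
Proof. by case. Qed.

Unset Implicit Arguments.

Theorem proposition5p4 (V : finType) (e : rel V) (R : realFieldType)
  (sigma : V -> R) (u : V) (r : nat) (Bs : 'I_r -> V -> V) :
  is_SET e ->
  (forall x, x \in matches e [set: V] -> 0 < sigma x) ->
  (forall i, is_bracket e [set: V] (Bs i)) ->
  (* (a) the restrictions to V(T_u) are sigma_u-resolving for T_u *)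
  resolving e (Tsub e u) sigma Bs ->
  (* (b) *)
  (forall i x, x \in matches e [set: V] -> x \notin Tsub e u ->
     Bs i x \notin Pof e u) ->
  (* (c) *)
  (forall B B', is_bracket e [set: V] B -> is_bracket e [set: V] B' ->
     (forall i, score e [set: V] sigma (Bs i) B = score e [set: V] sigma (Bs i) B') ->
     forall a, a \in players e [set: V] :\: Pof e u ->
     forall x, x \in matches e [set: V] -> (B x == a) = (B' x == a)) ->
  resolving e [set: V] sigma Bs.
Proof.
move=> SET _ Bs_bracket resolving_Tu Bs_out same_outside.
have functional := SET_functional SET; have acyclic := SET_acyclic SET.
have bracket_Tu := bracket_closed acyclic (@Tsub_closed V e u).
apply/resolving_eq_scores => B B' B_bracket B'_bracket eq_scores.
have same_out := same_outside B B' B_bracket B'_bracket eq_scores.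
have eq_Tu : {in Tsub e u, B =1 B'}.
  apply: (proj1 (resolving_eq_scores _ _ _ _) resolving_Tu).
  - exact: bracket_Tu B_bracket.
  - exact: bracket_Tu B'_bracket.
  - by move=> i; exact: (score_Tsub_eq same_out (Bs_bracket i) (Bs_out i) (eq_scores i)).
by move=> v _; exact: (agree_from_Tsub functional acyclic B_bracket B'_bracket same_out eq_Tu).
Qed.
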